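(* Let $c$ be an odd positive integer and let $K$ be the set partition of $S_c$ whose only part with more than one element is the set of cyclic shifts of the identity, $\{12\cdots c,\ 23\cdots c1,\ \ldots,\ c12\cdots(c-1)\}$. Let $n>c$ be even. Then the number of even non-avoiders in $S_n$ equals the number of odd non-avoiders in $S_n$.
   Context: Permutations are written in one-line notation as words. The order permutation (standardization) of a word $u$ of distinct positive integers of length $\ell$ is the unique $\pi\in S_\ell$ with $\pi_i<\pi_j$ iff $u_i<u_j$. A hit in a permutation is a contiguous subword of length $c$ whose order permutation is a cyclic shift of the identity of $S_c$; a non-avoider is a permutation containing at least one hit. Even/odd refers to the sign of a permutation. *)

From mathcomp Require Import all_boot all_order all_fingroup.
Set Implicit Arguments. Unset Strict Implicit. Unset Printing Implicit Defensive.

(* One-line notation of s in S_n (values 0-based: s(0) ... s(n-1));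
   only relative order matters below. *)
Definition oneline n (s : 'S_n) : seq nat := [seq val (s i) | i <- enum 'I_n].

(* The contiguous subword of w of length c starting at position i has as
   order permutation the cyclic shift (k+1)(k+2)...c 1...k of id_c, i.e.
   pi_a = ((a + k) mod c) + 1, and u_a < u_b iff pi_a < pi_b. *)
Definition is_hit_at (c : nat) (w : seq nat) (i : nat) : bool :=
  (i + c <= size w) &&
  [exists k : 'I_c, [forall a : 'I_c, [forall b : 'I_c,
     (nth 0 w (i + a) < nth 0 w (i + b)) == ((a + k) %% c < (b + k) %% c)]]].

Definition nonavoider (c n : nat) (s : 'S_n) : bool :=
  [exists i : 'I_n, is_hit_at c (oneline s) i].

From mathcomp Require Import all_boot all_order all_fingroup.
From mathcomp Require Import zify.
Set Implicit Arguments. Unset Strict Implicit. Unset Printing Implicit Defensive.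

(* Right multiplication by the n-cycle v |-> v + 1 (mod n) on values is a
   parity-reversing bijection of S_n when n is even.  It maps hits to hits:
   adding 1 to the values of a window either keeps its order pattern, or sends
   its maximum n - 1 to 0, which turns the cyclic shift by k into the cyclic
   shift by k + 1.  Hence it exchanges even and odd non-avoiders. *)

Definition ordS_perm n : 'S_n := perm (@ordS_inj n).

Lemma ordS_permE n (x : 'I_n) : ordS_perm n x = ordS x.
Proof. exact: permE. Qed.

Lemma iter_ordS n (x : 'I_n) m : val (iter m (@ordS n) x) = (x + m) %% n.
Proof.
elim: m => [|m IH] /=; first by rewrite addn0 modn_small.
by rewrite IH -addn1 modnDml addn1 addnS.
Qed.

Lemma porbits_ordS_perm n :
  porbits (ordS_perm n.+1) = [set porbit (ordS_perm n.+1) ord0].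
Proof.
have porbit_ord0 x : porbit (ordS_perm n.+1) x = porbit (ordS_perm n.+1) ord0.
  apply/eqP; rewrite eq_porbit_mem; apply/porbitP; exists x; apply/val_inj.
  rewrite permX (eq_iter (ordS_permE (n:=n.+1))) iter_ordS /=.
  by rewrite add0n modn_small.
apply/setP => X; rewrite inE.
by apply/imsetP/eqP => [[x _ ->]|->]; [exact: porbit_ord0 | exists ord0].
Qed.

Lemma odd_ordS_perm n : 0 < n -> odd_perm (ordS_perm n) = ~~ odd n.
Proof.
case: n => // n _.
by rewrite /odd_perm porbits_ordS_perm cards1 card_ord addbT.
Qed.

Section OrderPatterns.

Variable I : eqType.
Implicit Types (f g : I -> nat) (m : I).

Definition same_order f g := forall a b, (f a < f b) = (g a < g b).

(* Both adding 1 (mod n) to a window whose maximum n - 1 sits at m, and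
   passing from the cyclic shift by k to the one by k + 1, act as [wrap_max m]. *)
Definition wrap_max m f a := if a == m then 0 else (f a).+1.

Lemma same_order_wrap_max m f g :
  same_order f g -> same_order (wrap_max m f) (wrap_max m g).
Proof.
move=> fg a b; rewrite /wrap_max.
by case: (a == m); case: (b == m); rewrite ?ltnS.
Qed.

Lemma same_order_inj f g : same_order f g -> injective g -> injective f.
Proof.
move=> fg g_inj a b fab; apply: g_inj.
by case: (ltngtP (g a) (g b)) => //; rewrite -fg fab ltnn.
Qed.

Lemma succ_mod_wrap_max n m f :
  injective f -> (forall a, f a < n) -> f m = n.-1 ->
  forall a, (f a).+1 %% n = wrap_max m f a.
Proof.
move=> f_inj f_lt fm a; rewrite /wrap_max.
have n_gt0 : 0 < n by have := f_lt m; lia.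
case: eqP => [->|/eqP a_m]; first by rewrite fm prednK // modnn.
have : f a != f m by apply: contra a_m => /eqP/f_inj ->.
by rewrite fm => fa_ne; rewrite modn_small //; have := f_lt a; lia.
Qed.

End OrderPatterns.

Definition cyclic_rank c (k a : 'I_c) : nat := (a + k) %% c.

Lemma cyclic_rank_inj c (k : 'I_c) : injective (cyclic_rank k).
Proof.
move=> a b /eqP; rewrite /cyclic_rank eqn_modDr !modn_small // => /eqP.
exact: val_inj.
Qed.

Lemma cyclic_rank_max c (k a : 'I_c) : cyclic_rank k a <= c.-1.
Proof. by rewrite /cyclic_rank -ltnS prednK ?ltn_pmod //; have := ltn_ord k; lia. Qed.

Lemma exists_cyclic_rank_top c (k : 'I_c) : exists m : 'I_c, cyclic_rank k m = c.-1.
Proof.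
have c_gt0 : 0 < c by have := ltn_ord k; lia.
exists (Ordinal (ltn_pmod (c.-1 + (c - k)) c_gt0)).
rewrite /cyclic_rank /= modnDml.
have -> : c.-1 + (c - k) + k = c.-1 + c by have := ltn_ord k; lia.
by rewrite modnDr modn_small //; lia.
Qed.

Lemma cyclic_rank_ordS c (k m : 'I_c) :
  cyclic_rank k m = c.-1 -> cyclic_rank (ordS k) =1 wrap_max m (cyclic_rank k).
Proof.
move=> km a; have c_gt0 : 0 < c by have := ltn_ord k; lia.
have -> : cyclic_rank (ordS k) a = (cyclic_rank k a).+1 %% c.
  by rewrite /cyclic_rank /= modnDmr addnS -[in RHS]addn1 modnDml addn1.
rewrite /wrap_max; case: eqP => [->|/eqP a_m]; first by rewrite km prednK ?modnn.
have : cyclic_rank k a != c.-1 by rewrite -km (inj_eq (@cyclic_rank_inj c k)).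
by have := cyclic_rank_max k a => rank_le rank_ne; rewrite modn_small //; lia.
Qed.

Lemma same_order_cyclic_rank_succ_mod n c (f : 'I_c -> nat) (k : 'I_c) :
  (forall a, f a < n) -> same_order f (cyclic_rank k) ->
  exists k' : 'I_c, same_order (fun a => (f a).+1 %% n) (cyclic_rank k').
Proof.
move=> f_lt fk; have [m km] := exists_cyclic_rank_top k.
have f_max a : f a <= f m by rewrite leqNgt fk km -leqNgt cyclic_rank_max.
have [fm|fm] := eqVneq (f m) n.-1.
- exists (ordS k) => a b.
  have f_inj := same_order_inj fk (@cyclic_rank_inj c k).
  rewrite !(succ_mod_wrap_max f_inj f_lt fm) !(cyclic_rank_ordS km).
  exact: same_order_wrap_max.
- exists k => a b.
  have succ_lt x : (f x).+1 < n by have := f_max x; have := f_lt m; lia.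
  by rewrite !modn_small ?succ_lt // ltnS fk.
Qed.

Lemma size_oneline n (s : 'S_n) : size (oneline s) = n.
Proof. by rewrite size_map size_enum_ord. Qed.

Lemma nth_oneline n (s : 'S_n) (j : 'I_n) : nth 0 (oneline s) j = val (s j).
Proof. by rewrite (nth_map j) ?size_enum_ord // nth_ord_enum. Qed.

Lemma hit_at_mul_ordS_perm c n (s : 'S_n) i :
  is_hit_at c (oneline s) i -> is_hit_at c (oneline (s * ordS_perm n)) i.
Proof.
rewrite /is_hit_at !size_oneline => /andP [i_c /existsP [k hit]].
rewrite i_c; have j_lt (a : 'I_c) : i + a < n by have := ltn_ord a; lia.
pose f a := val (s (Ordinal (j_lt a))).
have fk : same_order f (cyclic_rank k).
  move=> a b; move/forallP: hit => /(_ a) /forallP /(_ b) /eqP.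
  by rewrite !(nth_oneline s (Ordinal (j_lt _))).
have [k' fk'] := same_order_cyclic_rank_succ_mod (fun a => ltn_ord _) fk.
apply/existsP; exists k'; apply/forallP => a; apply/forallP => b; apply/eqP.
by rewrite !(nth_oneline _ (Ordinal (j_lt _))) !permM !ordS_permE -fk'.
Qed.

Lemma nonavoider_mul_ordS_perm c n (s : 'S_n) :
  nonavoider c s -> nonavoider c (s * ordS_perm n).
Proof. by move=> /existsP [i hit]; apply/existsP; exists i; exact: hit_at_mul_ordS_perm. Qed.

Theorem theorem2p14 (c n : nat) :
  odd c -> 0 < c -> c < n -> ~~ odd n ->
  #|[set s : 'S_n | nonavoider c s & ~~ odd_perm s]| =
  #|[set s : 'S_n | nonavoider c s & odd_perm s]|.
Proof.
move=> _ _ c_lt_n n_even.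
have r_odd : odd_perm (ordS_perm n) by rewrite odd_ordS_perm // (leq_ltn_trans _ c_lt_n).
pose N (b : bool) := [set s : 'S_n | nonavoider c s & odd_perm s == b].
have N_le b : #|N b| <= #|N (~~ b)|.
  rewrite -(card_imset _ (mulIg (ordS_perm n))); apply: subset_leq_card.
  apply/subsetP => t /imsetP [s]; rewrite !inE => /andP [s_nonav /eqP <-] ->.
  by rewrite nonavoider_mul_ordS_perm //= odd_permM r_odd addbT.
have N_false : N false = [set s | nonavoider c s & ~~ odd_perm s].
  by apply/setP => s; rewrite !inE eqbF_neg.
have N_true : N true = [set s | nonavoider c s & odd_perm s].
  by apply/setP => s; rewrite !inE eqb_id.
by apply/eqP; rewrite -N_false -N_true eqn_leq N_le (N_le true).
Qed.
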